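(* Suppose that $\varphi,\psi\in\boldsymbol{\mathcal X}_N$ satisfy $\mathrm{dist}_\infty(\operatorname{supp} \varphi, \operatorname{supp} \psi) > l-1$. Then \begin{equation} \langle \mathscr{T} \varphi, \psi \rangle = 0, \quad \langle \mathscr{T}' \varphi, \psi \rangle = 0, \quad \langle \mathscr{R} \varphi, \psi \rangle = 0, \quad \langle \mathscr{R}' \varphi, \psi \rangle = 0. \end{equation}
   Context: Let $L\ge 3$ be an odd integer, $N\ge 1$ an integer, $d\ge 2$, $m\ge1$, and let $\mathbb T_N=(\mathbb Z/L^N\mathbb Z)^d$ be the discrete torus, with the distance $\rho_\infty(x,y)=\inf\{|x-y+z|_\infty : z\in (L^N\mathbb Z)^d\}$ and, for sets $M_1,M_2\subset\mathbb T_N$, $\mathrm{dist}_\infty(M_1,M_2)=\min\{\rho_\infty(x,y): x\in M_1, y\in M_2\}$. Let $\boldsymbol{\mathcal X}_N$ be the space of functions $\varphi:\mathbb T_N\to\mathbb R^m$ with $\sum_{x\in\mathbb T_N}\varphi(x)=0$, with scalar product $\langle\varphi,\psi\rangle=\sum_{x\in\mathbb T_N}\langle\varphi(x),\psi(x)\rangle_{\mathbb R^m}$. Let $(\nabla\varphi)^r_j(x)=\varphi^r(x+e_j)-\varphi^r(x)$ and $(\nabla^*\varphi)^r_j(x)=\varphi^r(x-e_j)-\varphi^r(x)$. Let $A:\mathbb R^{m\times d}\to\mathbb R^{m\times d}$ be linear, symmetric and positive definite, define $(\varphi,\psi)_+=\sum_{x\in\mathbb T_N}\langle A\nabla\varphi(x),\nabla\psi(x)\rangle_{\mathbb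 R^{m\times d}}$ (a scalar product on $\boldsymbol{\mathcal X}_N$; the resulting Hilbert space is $\boldsymbol{\mathcal H}_+$) and $\mathscr A=\nabla^*A\nabla$, so that $\langle\mathscr A\varphi,\psi\rangle=(\varphi,\psi)_+$. Let $l\ge 3$ be an integer with $l-1<L^N$, $Q=\{1,\ldots,l-1\}^d\subset\mathbb T_N$, and for $x\in\mathbb T_N$ let $\boldsymbol{\mathcal H}_+(Q+x)=\{\varphi\in\boldsymbol{\mathcal X}_N:\varphi=0 \text{ on } \mathbb T_N\setminus(Q+x)\}$. Let $\varPi_x$ be the $(\cdot,\cdot)_+$-orthogonal projection of $\boldsymbol{\mathcal H}_+$ onto $\boldsymbol{\mathcal H}_+(Q+x)$. Define $\mathscr T=l^{-d}\sum_{x\in\mathbb T_N}\varPi_x$, its dual $\mathscr T'$ with respect to $\langle\cdot,\cdot\rangle$ (i.e. $\langle\mathscr T'\varphi,\psi\rangle=\langle\varphi,\mathscr T\psi\rangle$; equivalently $\mathscr T'=\mathscr A\mathscr T\mathscr A^{-1}$), $\mathscr R=\mathrm{id}-\mathscr T$ and $\mathscr R'=\mathrm{id}-\mathscr T'$. *)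

From HB Require Import structures.
From mathcomp Require Import all_boot all_order all_algebra.
From mathcomp Require Import reals.
Set Implicit Arguments. Unset Strict Implicit. Unset Printing Implicit Defensive.
Import Order.TTheory GRing.Theory Num.Theory.
Local Open Scope ring_scope.

(* Discrete torus (Z / n Z)^d, n = L^N, as row vectors over 'I_n = Z/nZ
   (written 'I_n.-1.+1, which is 'I_n for n >= 1, to get the Zp group law). *)
Definition tor (n d : nat) := 'rV['I_n.-1.+1]_d.

Definition ej (n d : nat) (j : 'I_d) : tor n d :=
  \row_(i < d) (if i == j then inord 1 else 0).

(* circular distance on Z/nZ: min over integer shifts of |a - b + k n| *)
Definition cdist (k : nat) (a b : 'I_k.+1) : nat :=
  minn (nat_of_ord (a - b)%R) (nat_of_ord (b - a)%R).

(* rho_infty(x,y) = inf_{z in (nZ)^d} |x - y + z|_infty *)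
Definition rho (n d : nat) (x y : tor n d) : nat :=
  (\max_(i < d) cdist (x ord0 i) (y ord0 i))%N.

Section Fields.
Variable R : realType.
Variables n d m : nat.

Definition field := tor n d -> 'rV[R]_m.

Definition inX (phi : field) : Prop := \sum_(x : tor n d) phi x = 0.

Definition grad (phi : field) (x : tor n d) : 'M[R]_(m, d) :=
  \matrix_(r < m, j < d) (phi (x + ej n j) 0 r - phi x 0 r).

Definition frob (F G : 'M[R]_(m, d)) : R := \sum_(r < m) \sum_(j < d) F r j * G r j.

Definition ip (phi psi : field) : R :=
  \sum_(x : tor n d) \sum_(r < m) phi x 0 r * psi x 0 r.

Definition ipA (A : 'M[R]_(m, d) -> 'M[R]_(m, d)) (phi psi : field) : R :=
  \sum_(x : tor n d) frob (A (grad phi x)) (grad psi x).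

Definition inQ (l : nat) (x y : tor n d) : bool :=
  [forall i : 'I_d, (1 <= nat_of_ord ((y - x)%R ord0 i) <= l - 1)%N].

Definition inHQ (l : nat) (x : tor n d) (chi : field) : Prop :=
  inX chi /\ forall y, ~~ inQ l x y -> chi y = 0.

Definition is_orth_proj (A : 'M[R]_(m, d) -> 'M[R]_(m, d)) (S : field -> Prop)
  (phi P : field) : Prop :=
  S P /\ forall chi, S chi -> ipA A (fun y => phi y - P y) chi = 0.

Definition Top (l : nat) (Pi : tor n d -> field -> field) (phi : field) : field :=
  fun y => (l%:R ^- d) *: \sum_(x : tor n d) Pi x phi y.

End Fields.

From HB Require Import structures.
From mathcomp Require Import all_boot all_order all_algebra.
From mathcomp Require Import reals zify ring.
Set Implicit Arguments. Unset Strict Implicit.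
Import Order.TTheory GRing.Theory Num.Theory.
Local Open Scope ring_scope.

(* Fix a box Q + x.  If psi vanishes on Q + x, then Pi_x phi, which lives in
   Q + x, is orthogonal to psi for support reasons.  Otherwise psi(w) <> 0 for
   some w in the box, so phi vanishes within distance l - 1 of the box, and the
   gradients of phi and of any field supported in Q + x have disjoint supports.
   Hence (phi, Pi_x phi)_+ = 0, and orthogonality of the projection leaves
   (Pi_x phi, Pi_x phi)_+ = 0: Pi_x phi is constant, hence zero because it
   vanishes off the box.  Averaging over x gives <T phi, psi> = 0; the claim
   for T' follows by duality (with the roles of phi and psi swapped), and those
   for R and R' from <phi, psi> = 0. *)

Section CircularDistance.
Variable k : nat.
Implicit Types a b c : 'I_k.+1.

Lemma val_subZp [a b] : (b <= a)%N -> nat_of_ord (a - b) = (a - b)%N.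
Proof.
move=> le_ba; rewrite -[a in a - b]valZpK -[b in _ - b]valZpK.
have -> : inZp a = inZp (a - b)%N + inZp b :> 'I_k.+1
  by apply: val_inj; rewrite /= modnDm subnK.
by rewrite addrK /= modn_small // (leq_ltn_trans (leq_subr _ _) (ltn_ord a)).
Qed.

Lemma cdist_sym a b : cdist a b = cdist b a.
Proof. by rewrite /cdist minnC. Qed.

Lemma cdist_subr a b c : cdist (a - c) (b - c) = cdist a b.
Proof.
have E x y : x - c - (y - c) = x - y :> 'I_k.+1 by rewrite opprB addrA subrK.
by rewrite /cdist !E.
Qed.

Lemma cdist_le_subn [a b] : (b <= a)%N -> (cdist a b <= a - b)%N.
Proof. by move=> le_ba; rewrite /cdist -(val_subZp le_ba) geq_minl. Qed.

Lemma cdist_box_step (l : nat) (c q u v : 'I_k.+1) :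
  (1 <= c <= l - 1)%N -> (1 <= q <= l - 1)%N -> (u <= 1)%N -> (v <= 1)%N ->
  (cdist (c - v + u)%R q <= l - 1)%N.
Proof.
move=> c_box q_box u_le1 v_le1.
have p_le_l : (nat_of_ord (c - v + u)%R <= l)%N.
  have -> : nat_of_ord (c - v + u)%R = (((c - v)%R + u) %% k.+1)%N by [].
  by rewrite val_subZp ?(leq_trans (leq_mod _ _)) //; lia.
case: (leqP q (c - v + u)%R) => [le_qp | /ltnW le_pq].
  by apply: leq_trans (cdist_le_subn le_qp) _; lia.
by rewrite cdist_sym; apply: leq_trans (cdist_le_subn le_pq) _; lia.
Qed.

End CircularDistance.

Section TorusBoxes.
Variables n d : nat.
Implicit Types x y b w u v : tor n d.

Definition unit_step u := forall i, (nat_of_ord (u ord0 i) <= 1)%N.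

Lemma unit_step0 : unit_step 0.
Proof. by move=> i; rewrite mxE. Qed.

Lemma unit_step_ej j : unit_step (ej n j).
Proof.
move=> i; rewrite mxE; case: eqP => // _.
by rewrite /inord val_insubd; case: ifP.
Qed.

Lemma rho_refl x : rho x x = 0%N.
Proof.
by apply/eqP; rewrite -leqn0; apply/bigmax_leqP => i _; rewrite /cdist subrr.
Qed.

Lemma rho_sym x y : rho x y = rho y x.
Proof. by apply: eq_bigr => i _; rewrite cdist_sym. Qed.

Lemma rho_box_step (l : nat) x b w u v :
  inQ l x b -> inQ l x w -> unit_step u -> unit_step v ->
  (rho (b - v + u)%R w <= l - 1)%N.
Proof.
move=> /forallP b_box /forallP w_box u_step v_step.
apply/bigmax_leqP => i _; rewrite -(cdist_subr _ _ (x ord0 i)).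
have -> : (b - v + u) ord0 i - x ord0 i = (b - x) ord0 i - v ord0 i + u ord0 i.
  by rewrite !mxE addrAC (addrAC (b ord0 i)).
by rewrite [w ord0 i - _](_ : _ = (w - x) ord0 i) ?cdist_box_step // !mxE.
Qed.

End TorusBoxes.

Section BoxSupportedFields.
Variables (R : realType) (n d m l : nat) (x : tor n d).
Implicit Types (phi psi chi : field R n d m) (y z w : tor n d).

Lemma grad_eq0_local phi y :
  phi y = 0 -> (forall j, phi (y + ej n j) = 0) -> grad phi y = 0.
Proof. by move=> phi_y phi_yj; apply/matrixP => r j; rewrite !mxE phi_y phi_yj !mxE subrr. Qed.

Lemma grad_neq0_box chi y : (forall z, ~~ inQ l x z -> chi z = 0) ->
  grad chi y != 0 -> exists2 v, unit_step v & inQ l x (y + v).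
Proof.
move=> chi_box grad_chi.
have [y_box | y_out] := boolP (inQ l x y).
  by exists 0; rewrite ?addr0 //; apply: unit_step0.
have [j yj_box | no_j] := pickP (fun j => inQ l x (y + ej n j)).
  by exists (ej n j); [apply: unit_step_ej|].
by move/eqP: grad_chi; case; apply: grad_eq0_local => [|j]; apply: chi_box; rewrite ?no_j.
Qed.

Lemma grad_eq0_far chi phi psi w y :
  (forall z w, phi z != 0 -> psi w != 0 -> (l - 1 < rho z w)%N) ->
  (forall z, ~~ inQ l x z -> chi z = 0) -> inQ l x w -> psi w != 0 ->
  grad chi y != 0 -> grad phi y = 0.
Proof.
move=> far chi_box w_box psi_w /(grad_neq0_box chi_box) [v v_step yv_box].
have phi_near u : unit_step u -> phi (y + u) = 0.
  move=> u_step; apply: contraTeq (rho_box_step yv_box w_box u_step v_step).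
  by rewrite addrK -ltnNge => phi_yu; apply: far.
apply: grad_eq0_local => [|j]; last exact/phi_near/unit_step_ej.
by rewrite -[y]addr0; apply/phi_near/unit_step0.
Qed.

Lemma box_field_eq0 chi (j : 'I_d) : (1 < n)%N ->
  (forall z, ~~ inQ l x z -> chi z = 0) -> (forall y, grad chi y = 0) ->
  forall y, chi y = 0.
Proof.
move=> n_gt1 chi_box grad_chi.
have chi_ej y : chi (y + ej n j) = chi y.
  apply/rowP => r; have /matrixP/(_ r j)/eqP := grad_chi y.
  by rewrite !mxE subr_eq0 => /eqP.
have chi_back t y : chi (y - ej n j *+ t) = chi y.
  elim: t => [|t IH]; first by rewrite subr0.
  by rewrite -IH -(chi_ej (y - ej n j *+ t.+1)) mulrSr opprD addrA subrK.
(* Walk back along e_j until the j-th coordinate relative to x is 0: off the box. *)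
move=> y; rewrite -(chi_back ((y - x) ord0 j) y); apply: chi_box.
apply/forallP => /(_ j); rewrite !mxE mulmxnE !mxE eqxx Zp_mulrn.
rewrite inordK ?prednK ?(ltnW n_gt1) // mul1n valZpK.
by rewrite opprB addrA (addrC (y _ _)) addrK subrr.
Qed.

End BoxSupportedFields.

Section InnerProducts.
Variables (R : realType) (n d m : nat).
Implicit Types phi psi chi : field R n d m.

Lemma ipC phi psi : ip phi psi = ip psi phi.
Proof. by apply: eq_bigr => y _; apply: eq_bigr => r _; rewrite mulrC. Qed.

Lemma ipBl phi chi psi : ip (fun y => phi y - chi y) psi = ip phi psi - ip chi psi.
Proof.
rewrite /ip -sumrB; apply: eq_bigr => y _; rewrite -sumrB.
by apply: eq_bigr => r _; rewrite !mxE mulrBl.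
Qed.

Lemma ip_eq0_disjoint phi psi : (forall y, phi y != 0 -> psi y = 0) -> ip phi psi = 0.
Proof.
move=> disj; apply: big1 => y _; have [phi_y | /disj psi_y] := eqVneq (phi y) 0.
  by apply: big1 => r _; rewrite phi_y mxE mul0r.
by apply: big1 => r _; rewrite psi_y mxE mulr0.
Qed.

Lemma ip_Top (l : nat) (Pi : tor n d -> field R n d m -> field R n d m) phi psi :
  ip (Top l Pi phi) psi = l%:R ^- d * \sum_x ip (Pi x phi) psi.
Proof.
rewrite /ip /Top mulr_sumr; under [RHS]eq_bigr do rewrite mulr_sumr.
rewrite [RHS]exchange_big; apply: eq_bigr => y _.
under [RHS]eq_bigr do rewrite mulr_sumr.
rewrite [RHS]exchange_big; apply: eq_bigr => r _.
by rewrite !mxE summxE mulr_sumr mulr_suml; apply: eq_bigr => x _; rewrite mulrA.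
Qed.

End InnerProducts.

Section EnergyForm.
Variables (R : realType) (n d m : nat) (A : 'M[R]_(m, d) -> 'M[R]_(m, d)).
Hypothesis Alin : forall (a : R) (F G : 'M[R]_(m, d)), A (a *: F + G) = a *: A F + A G.
Hypothesis Apos : forall F : 'M[R]_(m, d), F != 0 -> 0 < frob (A F) F.
Implicit Types (F G H : 'M[R]_(m, d)) (phi psi chi : field R n d m).

Lemma AB F G : A (F - G) = A F - A G.
Proof. by have := Alin (-1) G F; rewrite !scaleN1r addrC => ->; rewrite addrC. Qed.

Lemma A0 : A 0 = 0.
Proof. by have := AB 0 0; rewrite !subrr. Qed.

Lemma frobBl F G H : frob (F - G) H = frob F H - frob G H.
Proof.
rewrite /frob -sumrB; apply: eq_bigr => r _; rewrite -sumrB.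
by apply: eq_bigr => j _; rewrite !mxE mulrBl.
Qed.

Lemma frob0l H : frob 0 H = 0.
Proof. by have := frobBl 0 0 H; rewrite !subrr. Qed.

Lemma frob0r F : frob F 0 = 0.
Proof. by apply: big1 => r _; apply: big1 => j _; rewrite mxE mulr0. Qed.

Lemma frobA_ge0 F : 0 <= frob (A F) F.
Proof. by have [->|/Apos/ltW//] := eqVneq F 0; rewrite frob0r. Qed.

Lemma gradB phi chi y : grad (fun z => phi z - chi z) y = grad phi y - grad chi y.
Proof. by apply/matrixP => r j; rewrite !mxE; ring. Qed.

Lemma ipABl phi chi psi :
  ipA A (fun z => phi z - chi z) psi = ipA A phi psi - ipA A chi psi.
Proof. by rewrite /ipA -sumrB; apply: eq_bigr => y _; rewrite gradB AB frobBl. Qed.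

Lemma ipA_eq0_disjoint phi chi :
  (forall y, grad chi y != 0 -> grad phi y = 0) -> ipA A phi chi = 0.
Proof.
move=> disj; apply: big1 => y _; have [->|/disj ->] := eqVneq (grad chi y) 0.
  exact: frob0r.
by rewrite A0 frob0l.
Qed.

Lemma grad_eq0_of_ipA chi : ipA A chi chi = 0 -> forall y, grad chi y = 0.
Proof.
move=> energy0 y; apply/eqP; apply: contraT => /Apos.
by rewrite (psumr_eq0P (fun y _ => frobA_ge0 (grad chi y)) energy0) ?ltxx.
Qed.

End EnergyForm.

Section FarFromTheBox.
Variables (R : realType) (n d m l : nat) (A : 'M[R]_(m, d) -> 'M[R]_(m, d)).
Hypothesis Alin : forall (a : R) (F G : 'M[R]_(m, d)), A (a *: F + G) = a *: A F + A G.
Hypothesis Apos : forall F : 'M[R]_(m, d), F != 0 -> 0 < frob (A F) F.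
Variables phi psi : field R n d m.
Hypothesis far : forall z w, phi z != 0 -> psi w != 0 -> (l - 1 < rho z w)%N.

Lemma orth_proj_eq0_far x P w (j : 'I_d) : (1 < n)%N ->
  is_orth_proj A (inHQ l x) phi P -> inQ l x w -> psi w != 0 -> forall y, P y = 0.
Proof.
move=> n_gt1 [P_in P_orth] w_box psi_w; have P_box := P_in.2.
have energy0 : ipA A P P = 0.
  have := P_orth P P_in; rewrite ipABl // ipA_eq0_disjoint // => [|y].
    by rewrite sub0r => /eqP; rewrite oppr_eq0 => /eqP.
  exact: grad_eq0_far far P_box w_box psi_w.
exact: box_field_eq0 j n_gt1 P_box (grad_eq0_of_ipA Apos energy0).
Qed.

Lemma ip_orth_proj_eq0 x P (j : 'I_d) : (1 < n)%N ->
  is_orth_proj A (inHQ l x) phi P -> ip P psi = 0.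
Proof.
move=> n_gt1 P_proj; have P_box := P_proj.1.2.
have [w /andP[w_box psi_w] | psi_out] := pickP (fun w => inQ l x w && (psi w != 0)).
  by apply: ip_eq0_disjoint => y; rewrite (orth_proj_eq0_far j n_gt1 P_proj w_box psi_w) eqxx.
apply: ip_eq0_disjoint => y P_y.
have y_box : inQ l x y by apply: contraTT P_y => /P_box ->; rewrite eqxx.
by move: (psi_out y); rewrite y_box => /negbFE/eqP.
Qed.

Lemma ip_Top_eq0 (Pi : tor n d -> field R n d m -> field R n d m) :
  (1 < n)%N -> (0 < d)%N -> (forall x, is_orth_proj A (inHQ l x) phi (Pi x phi)) ->
  ip (Top l Pi phi) psi = 0.
Proof.
move=> n_gt1 d_gt0 Pi_proj; rewrite ip_Top big1 ?mulr0 // => x _.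
exact: ip_orth_proj_eq0 (Ordinal d_gt0) n_gt1 (Pi_proj x).
Qed.

End FarFromTheBox.

Theorem lemma3p6 (R : realType) (L N d m l : nat)
  (HLodd : odd L) (HL : (3 <= L)%N) (HN : (1 <= N)%N) (Hd : (2 <= d)%N)
  (Hm : (1 <= m)%N) (Hl : (3 <= l)%N) (HlN : (l - 1 < L ^ N)%N)
  (A : 'M[R]_(m, d) -> 'M[R]_(m, d))
  (Alin : forall (a : R) (F G : 'M[R]_(m, d)), A (a *: F + G) = a *: A F + A G)
  (Asym : forall F G : 'M[R]_(m, d), frob (A F) G = frob F (A G))
  (Apos : forall F : 'M[R]_(m, d), F != 0 -> 0 < frob (A F) F)
  (Pi : tor (L ^ N) d -> field R (L ^ N) d m -> field R (L ^ N) d m)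
  (HPi : forall x phi, inX phi -> is_orth_proj A (inHQ l x) phi (Pi x phi))
  (T' : field R (L ^ N) d m -> field R (L ^ N) d m)
  (HT' : forall phi, inX phi ->
     inX (T' phi) /\ forall psi, inX psi -> ip (T' phi) psi = ip phi (Top l Pi psi))
  (phi psi : field R (L ^ N) d m) (Hphi : inX phi) (Hpsi : inX psi)
  (Hdist : forall x y, phi x != 0 -> psi y != 0 -> (l - 1 < rho x y)%N) :
  [/\ ip (Top l Pi phi) psi = 0,
      ip (T' phi) psi = 0,
      ip (fun y => phi y - Top l Pi phi y) psi = 0
    & ip (fun y => phi y - T' phi y) psi = 0].
Proof.
have n_gt1 : (1 < L ^ N)%N by rewrite -(exp1n N) ltn_exp2r // (leq_trans _ HL).
have d_gt0 : (0 < d)%N by apply: leq_trans Hd.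
have Hdist_sym x y : psi x != 0 -> phi y != 0 -> (l - 1 < rho x y)%N.
  by move=> psi_x phi_y; rewrite rho_sym; apply: Hdist.
have T_phi_psi : ip (Top l Pi phi) psi = 0.
  by apply: (ip_Top_eq0 Alin Apos Hdist n_gt1 d_gt0) => x; apply: HPi.
have T'_phi_psi : ip (T' phi) psi = 0.
  rewrite (HT' phi Hphi).2 // ipC.
  by apply: (ip_Top_eq0 Alin Apos Hdist_sym n_gt1 d_gt0) => x; apply: HPi.
have phi_psi : ip phi psi = 0.
  apply: ip_eq0_disjoint => y phi_y; apply/eqP; apply: contraT => /(Hdist _ _ phi_y).
  by rewrite rho_refl.
by split; rewrite // ipBl ?T_phi_psi ?T'_phi_psi phi_psi subr0.
Qed.
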